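(* Let $n\ge 1$ and let $s$ be an even integer with $0\le s\le n(n-1)$. Put $$p=\left\lfloor \frac{\sqrt{4s+1}-1}{2}\right\rfloor,\qquad q=\frac{s-p(p+1)}{2}.$$ Then $q$ is an integer with $0\le q\le p$, and $T(n,s)$ is the length-$n$ sequence whose first $q$ entries equal $p+1$, whose next $p+1-q$ entries equal $p$, whose $(p+2)$-nd entry (if $n\ge p+2$) equals $q$, and all of whose remaining entries equal $0$; i.e. $T(n,s)=\langle (p+1)^{q},\,p^{\,p+1-q},\,q,\,0^{\,n-p-2}\rangle$ (when $n=p+1$, necessarily $q=0$ and the trailing entry $q$ and zeros are omitted).
   Context: Notation: $\langle a^r\rangle$ denotes $r$ consecutive copies of the value $a$ within a sequence. For integers $n\ge1$ and even $s$ with $0\le s\le n(n-1)$, define $m=\min\{k\ge 1 : s\le k(k-1)\}$ and define the integer sequence $T(n,s)$ of length $n$ recursively by: (i) if $s=0$, $T(n,s)=\langle 0^n\rangle$; (ii) if $s>0$ and $n>m$, $T(n,s)=\langle \gamma_1,\dots,\gamma_m,0^{n-m}\rangle$ where $\gamma=T(m,s)$; (iii) if $s>0$ and $n\le m$, $T(n,s)=\langle n-1,\gamma_1+1,\dots,\gamma_{n-1}+1\rangle$ where $\gamma=T(n-1,\,s-2(n-1))$. *)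

From mathcomp Require Import all_boot.
Set Implicit Arguments. Unset Strict Implicit. Unset Printing Implicit Defensive.

Lemma mmin_ex (s : nat) : exists k, (0 < k) && (s <= k * k.-1).
Proof. exists s.+1; rewrite /= leq_pmull //. Qed.

Definition mmin (s : nat) : nat := ex_minn (mmin_ex s).

(* T with fuel: every recursive call strictly decreases n, so fuel n.+1
   suffices for all inputs considered. *)
Fixpoint Tf (fuel n s : nat) : seq nat :=
  match fuel with
  | 0 => nseq n 0
  | f.+1 =>
      if s == 0 then nseq n 0
      else let m := mmin s in
           if m < n then Tf f m s ++ nseq (n - m) 0
           else n.-1 :: map S (Tf f n.-1 (s - 2 * n.-1))
  end.

Definition T (n s : nat) : seq nat := Tf n.+1 n s.

Definition pT (s : nat) : nat := (Nat.sqrt (4 * s + 1)).-1 %/ 2.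

(** The proof rests on the decomposition s = p(p+1) + 2q with 0 <= q <= p,
    which is exactly what the floor of (sqrt(4s+1) - 1)/2 computes.  For such
    s the threshold m of the recursion is p+1 when q = 0 and p+2 otherwise.
    If n > m, rule (ii) pads T(m,s) with zeros; if n = m, rule (iii) reduces
    to T(n-1, (p-1)p + 2(q-1)), whose closed form shifted by one gives that of
    T(n,s). *)

From Stdlib Require Import PeanoNat.
From mathcomp Require Import all_boot zify.

Lemma pronic_leq m n : (m * m.+1 <= n * n.+1) = (m <= n).
Proof.
apply/idP/idP => [|le_mn]; last by rewrite leq_mul.
by apply: contraTT; rewrite -!ltnNge => lt_nm; rewrite ltn_mul.
Qed.

Lemma pT_bounds s : pT s * (pT s).+1 <= s < (pT s).+1 * (pT s).+2.
Proof.
rewrite /pT.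
have [lo hi] := Nat.sqrt_spec (4 * s + 1) (Nat.le_0_l _).
set r := Nat.sqrt (4 * s + 1) in lo hi *.
have r_pos : 1 <= r by nia.
have [k r_k] : exists k, r = 2 * k + 1 \/ r = 2 * k + 2 by exists (r.-1 %/ 2); lia.
have -> : r.-1 %/ 2 = k by lia.
nia.
Qed.

Lemma mmin_eq s k :
  0 < k -> k.-1 * k.-2 < s <= k * k.-1 -> mmin s = k.
Proof.
move=> k_gt0 /andP [lo hi]; rewrite /mmin.
case: ex_minnP => m /andP [m_gt0 s_le] m_min.
apply/eqP; rewrite eqn_leq m_min ?k_gt0 ?hi //=.
rewrite leqNgt; apply/negP => lt_mk.
have : m * m.-1 <= k.-1 * k.-2 by apply: leq_mul; lia.
lia.
Qed.

Lemma mmin_pronic p q :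
  0 < p -> q <= p -> mmin (p * p.+1 + 2 * q) = p.+1 + (0 < q).
Proof. by move=> p_gt0 q_le; apply: mmin_eq; case: posnP => /= q0; nia. Qed.

Definition stair (n p q : nat) : seq nat :=
  nseq q p.+1 ++ nseq (p.+1 - q) p ++ take (n - p.+1) (q :: nseq (n - p.+2) 0).

Lemma stair_zero n : 0 < n -> stair n 0 0 = nseq n 0.
Proof.
case: n => [|[|n]] // _; rewrite /stair /= -addn2 addnK.
by rewrite take_oversize ?size_nseq.
Qed.

Lemma stair_pad m n p q : p < m <= n -> (m = p.+1 -> q = 0) ->
  stair m p q ++ nseq (n - m) 0 = stair n p q.
Proof.
move=> /andP [p_lt_m m_le_n] m_q; rewrite /stair -!catA; congr (_ ++ _ ++ _).
case: (ltngtP m p.+1) => [|m_gt|m_eq]; first by lia.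
- have -> : n - p.+1 = (n - p.+2).+1 by lia.
  have -> : m - p.+1 = (m - p.+2).+1 by lia.
  rewrite /= !take_oversize ?size_nseq //; congr (_ :: _).
  by rewrite -nseqD; congr nseq; lia.
- rewrite m_eq subnn (m_q m_eq) /=.
  case: (ltnP p.+1 n) => [lt_n | le_n]; last by have -> : n - p.+1 = 0 by lia.
  have -> : n - p.+1 = (n - p.+2).+1 by lia.
  by rewrite /= take_oversize ?size_nseq.
Qed.

Lemma stair_shift n p q : 0 < p -> q <= p -> n = p.+1 + (0 < q) ->
  n.-1 :: map S (stair n.-1 p.-1 q.-1) = stair n p q.
Proof.
case: p => // p _; case: q => [|q] q_le n_eq; rewrite /stair.
- have -> : n = p.+2 by lia.
  by rewrite subn0 !subnn /= !cats0 map_nseq.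
- have -> : n = p.+3 by lia.
  by rewrite /= !subSnn !subnn !map_cat !map_nseq subSS.
Qed.

Lemma Tf_stair f n p q : n < f -> q <= p -> p < n -> (n = p.+1 -> q = 0) ->
  Tf f n (p * p.+1 + 2 * q) = stair n p q.
Proof.
elim: f n p q => [|f IH] n p q // n_lt q_le p_lt n_q /=.
case: eqP => [s0 | s_ne0].
  have [-> ->] : p = 0 /\ q = 0 by nia.
  by rewrite stair_zero //; lia.
have p_gt0 : 0 < p by nia.
rewrite mmin_pronic //; set m := p.+1 + (0 < q).
have m_q : q = 0 /\ m = p.+1 \/ 0 < q /\ m = p.+2 by rewrite /m; case: posnP; lia.
case: ltnP => [m_lt | n_le].
- by rewrite IH ?stair_pad //; lia.
- have n_m : n = m by lia.
  have -> : p * p.+1 + 2 * q - 2 * n.-1 = p.-1 * p.-1.+1 + 2 * q.-1 by nia.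
  by rewrite IH ?stair_shift //; lia.
Qed.

Lemma odd_pronic p : odd (p * p.+1) = false.
Proof. by rewrite oddM /= andbN. Qed.

Theorem theorem4 (n s : nat) :
  1 <= n -> ~~ odd s -> s <= n * n.-1 ->
  let p := pT s in
  let q := (s - p * p.+1) %/ 2 in
  [/\ p * p.+1 <= s, ~~ odd (s - p * p.+1), q <= p,
      p.+1 <= n & n = p.+1 -> q = 0] /\
  T n s = nseq q p.+1 ++ nseq (p.+1 - q) p
          ++ take (n - p.+1) (q :: nseq (n - p.+2) 0).
Proof.
move=> n_gt0 s_even s_le p q.
have /andP [s_ge s_lt] := pT_bounds s; rewrite -/p in s_ge s_lt.
have rem_even : ~~ odd (s - p * p.+1) by rewrite oddB // odd_pronic addbF.
have s_eq : s = p * p.+1 + 2 * q.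
  have /dvdnP [k k_eq] : 2 %| s - p * p.+1 by rewrite dvdn2.
  by rewrite /q k_eq mulnK //; lia.
have q_le : q <= p by nia.
have p_lt : p < n.
  have : p * p.+1 <= n.-1 * n.-1.+1 by rewrite prednK //; lia.
  by rewrite pronic_leq; lia.
have n_q : n = p.+1 -> q = 0 by move=> n_eq; rewrite n_eq /= in s_le; nia.
by split; [split | rewrite /T s_eq Tf_stair].
Qed.
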